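(* Consider a transformer with $L$ layers and $H$ attention heads per layer, each head of dimension $d_h$. For a prompt $\rho$ of length $|\rho|$, let the query position be the last position, and for layer $\ell$ and head $h$ let $$\alpha_{ti}^{(\ell,h)}=\frac{\exp\left(q_t^{(\ell,h)\top}k_i^{(\ell,h)}/\sqrt{d_h}\right)}{\sum_{j=1}^{|\rho|}\exp\left(q_t^{(\ell,h)\top}k_j^{(\ell,h)}/\sqrt{d_h}\right)}$$ be the attention weights. Assume that for every prompt, every layer $\ell$, head $h$ and position $j$, $\|q_t^{(\ell,h)}\|\le Q_{\ell,h}$ and $\|k_j^{(\ell,h)}\|\le K_{\ell,h}$. Let $\mathsf{R}$ be a task-relevant set of $m$ token positions and define the averaged attention mass $$A(\rho)=\frac{1}{LH}\sum_{\ell=1}^{L}\sum_{h=1}^{H}\sum_{i\in\mathsf{R}}\alpha_{ti}^{(\ell,h)}.$$ Suppose feasibility of a prompt requires $A(\rho)\ge\tau$ for a given $\tau>0$, and let $|\rho|_{\mathrm{sat}}$ denote the supremum of lengths $|\rho|$ of prompts satisfying this requirement. Let $|\rho|_{\mathrm{feasible}}>0$ be the hardware-feasible prompt length. Then $$\Delta_{\rho}:=\frac{|\rho|_{\mathrm{sat}}}{|\rho|_{\mathrm{feasible}}}\le\frac{m}{\tau|\rho|_{\mathrm{feasible}}}\exp\left(\max_{\ell,h}\frac{2Q_{\ell,h}K_{\ell,h}}{\sqrt{d_h}}\right).$$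
   Context: $|\rho|_{\mathrm{feasible}}$ is an arbitrary positive number (in the paper, the maximal prompt length allowed by KV-cache memory); $|\rho|_{\mathrm{sat}}$ is the saturation length, i.e. the largest prompt length for which the attention-mass requirement $A(\rho)\ge\tau$ can hold. *)

From HB Require Import structures.
From mathcomp Require Import all_boot all_order all_algebra.
From mathcomp Require Import all_classical all_reals all_analysis.
Set Implicit Arguments. Unset Strict Implicit. Unset Printing Implicit Defensive.
Import Order.TTheory GRing.Theory Num.Theory.
Local Open Scope ring_scope.

Definition dotv {R : realType} {d : nat} (u v : 'rV[R]_d) : R :=
  \sum_(i < d) u 0 i * v 0 i.
Definition normv {R : realType} {d : nat} (u : 'rV[R]_d) : R :=
  Num.sqrt (dotv u u).

Definition attn {R : realType} {d n : nat} (q : 'rV[R]_d) (k : 'I_n -> 'rV[R]_d)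
    (i : 'I_n) : R :=
  expR (dotv q (k i) / Num.sqrt d%:R) /
  \sum_(j < n) expR (dotv q (k j) / Num.sqrt d%:R).

Definition attn_mass {R : realType} {L H d n : nat}
    (q : 'I_L -> 'I_H -> 'rV[R]_d) (k : 'I_L -> 'I_H -> 'I_n -> 'rV[R]_d)
    (Rel : {set 'I_n}) : R :=
  (L * H)%:R^-1 *
  \sum_(l < L) \sum_(h < H) \sum_(i in Rel) attn (q l h) (k l h) i.

(* Cauchy-Schwarz bounds every attention score q.k / sqrt d_h of head (l, h)
   by Q K / sqrt d_h in absolute value, so the exponentials entering a softmax
   over |rho| keys differ by a factor at most exp (2 Q K / sqrt d_h), and each
   attention weight is at most that factor divided by |rho|.  Summing over the
   m relevant positions and averaging over layers and heads gives
   tau <= A(rho) <= m exp (max 2 Q K / sqrt d_h) / |rho|, which bounds the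
   length of every feasible prompt, hence their supremum. *)
From HB Require Import structures.
From mathcomp Require Import all_boot all_order all_algebra.
From mathcomp Require Import all_classical all_reals all_analysis.
From mathcomp Require Import ring lra.
Import Order.TTheory GRing.Theory Num.Theory.
Local Open Scope ring_scope.
Local Open Scope classical_set_scope.

Section CauchySchwarz.
Context {R : realType} {d : nat}.
Implicit Types u v : 'rV[R]_d.

Lemma dotv_self_ge0 u : 0 <= dotv u u.
Proof. by apply: sumr_ge0 => i _; rewrite -expr2 sqr_ge0. Qed.

Lemma sqr_dotv_le u v : dotv u v ^+ 2 <= dotv u u * dotv v v.
Proof.
have lagrange : \sum_i \sum_j (u 0 i * v 0 j - u 0 j * v 0 i) ^+ 2 =
    dotv u u * dotv v v + dotv v v * dotv u u - 2 * (dotv u v * dotv u v).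
  rewrite /dotv !big_distrlr mulr_sumr -big_split -sumrB /=.
  apply: eq_bigr => i _; rewrite mulr_sumr -big_split -sumrB /=.
  by apply: eq_bigr => j _; ring.
have : 0 <= \sum_i \sum_j (u 0 i * v 0 j - u 0 j * v 0 i) ^+ 2.
  by apply: sumr_ge0 => i _; apply: sumr_ge0 => j _; apply: sqr_ge0.
by rewrite lagrange expr2; lra.
Qed.

Lemma normr_dotv_le u v : `|dotv u v| <= normv u * normv v.
Proof.
by rewrite /normv -sqrtrM ?dotv_self_ge0 // -sqrtr_sqr ler_sqrt ?sqr_dotv_le
  ?mulr_ge0 ?dotv_self_ge0.
Qed.

End CauchySchwarz.

Lemma softmax_le {R : realType} {n : nat} (s : 'I_n -> R) (c : R) (i : 'I_n) :
  (forall j, `|s j| <= c) -> expR (s i) / \sum_j expR (s j) <= expR (2 * c) / n%:R.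
Proof.
move=> s_bound; have s_range j : - c <= s j <= c by rewrite -ler_norml.
have n_gt0 : 0 < n%:R :> R by rewrite ltr0n (leq_ltn_trans (leq0n i)).
have sum_ge : n%:R * expR (- c) <= \sum_j expR (s j).
  rewrite mulr_natl -[n in _ *+ n]card_ord -sumr_const.
  by apply: ler_sum => j _; rewrite ler_expR; case/andP: (s_range j).
have sum_gt0 : 0 < \sum_j expR (s j).
  by apply: lt_le_trans sum_ge; rewrite mulr_gt0 ?expR_gt0.
apply: (@le_trans _ _ (expR c / (n%:R * expR (- c)))).
  apply: ler_pM; rewrite ?expR_ge0 ?invr_ge0 ?(ltW sum_gt0) //.
    by rewrite ler_expR; case/andP: (s_range i).
  by rewrite lef_pV2 ?posrE // mulr_gt0 ?expR_gt0.
by rewrite invfM expRN invrK mulrCA -expRD mulrC -mulr2n mulr_natl.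
Qed.

Lemma attn_le {R : realType} {d n : nat} {q : 'rV[R]_d} {k : 'I_n -> 'rV[R]_d}
    {a b : R} (i : 'I_n) :
  normv q <= a -> (forall j, normv (k j) <= b) ->
  attn q k i <= expR (2 * (a * b / Num.sqrt d%:R)) / n%:R.
Proof.
move=> q_le k_le; rewrite /attn; apply: softmax_le => j.
rewrite normrM normfV [`|Num.sqrt _|]ger0_norm ?sqrtr_ge0 //.
apply: ler_wpM2r; first by rewrite invr_ge0 sqrtr_ge0.
apply: le_trans (normr_dotv_le _ _) _.
by apply: ler_pM; rewrite ?sqrtr_ge0.
Qed.

Lemma attn_mass_le {R : realType} {L H d n : nat} (q : 'I_L -> 'I_H -> 'rV[R]_d)
    (k : 'I_L -> 'I_H -> 'I_n -> 'rV[R]_d) (Rel : {set 'I_n}) (b : R) :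
  (0 < L)%N -> (0 < H)%N -> (forall l h i, attn (q l h) (k l h) i <= b) ->
  attn_mass q k Rel <= #|Rel|%:R * b.
Proof.
move=> L_gt0 H_gt0 attn_le_b.
have LH_neq0 : (L * H)%:R != 0 :> R by rewrite pnatr_eq0 -lt0n muln_gt0 L_gt0.
apply: (@le_trans _ _ ((L * H)%:R^-1 * \sum_(l < L) \sum_(h < H) (#|Rel|%:R * b))).
  rewrite ler_pM2l ?invr_gt0 ?lt0r ?LH_neq0 ?ler0n //.
  do 2![apply: ler_sum => ? _]; rewrite mulr_natl -sumr_const.
  by apply: ler_sum => i _; apply: attn_le_b.
rewrite !sumr_const !card_ord -mulrnA [(H * L)%N]mulnC.
by rewrite -(mulr_natl (#|Rel|%:R * b)) mulKf.
Qed.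

Lemma len_le_of_attn_mass_ge {R : realType} {L H d n : nat}
    (q : 'I_L -> 'I_H -> 'rV[R]_d) (k : 'I_L -> 'I_H -> 'I_n -> 'rV[R]_d)
    (Rel : {set 'I_n}) (Q K : 'I_L -> 'I_H -> R) (M tau : R) :
  (0 < L)%N -> (0 < H)%N -> (0 < n)%N ->
  (forall l h, normv (q l h) <= Q l h) ->
  (forall l h j, normv (k l h j) <= K l h) ->
  (forall l h, 2 * Q l h * K l h / Num.sqrt d%:R <= M) ->
  0 < tau -> tau <= attn_mass q k Rel ->
  n%:R <= #|Rel|%:R / tau * expR M.
Proof.
move=> L_gt0 H_gt0 n_gt0 q_le k_le M_ge tau_gt0 tau_le.
have mass_le : attn_mass q k Rel <= #|Rel|%:R * (expR M / n%:R).
  apply: attn_mass_le => // l h i.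
  apply: le_trans (attn_le i (q_le l h) (k_le l h)) _.
  by rewrite ler_pM2r ?invr_gt0 ?ltr0n // ler_expR !mulrA.
have := le_trans tau_le mass_le.
by rewrite mulrA ler_pdivlMr ?ltr0n // mulrAC ler_pdivlMr // mulrC.
Qed.

Theorem mainTheorem3 (R : realType) (L H d m : nat) (P : Type) (len : P -> nat)
  (q : forall rho : P, 'I_L -> 'I_H -> 'rV[R]_d)
  (k : forall rho : P, 'I_L -> 'I_H -> 'I_(len rho) -> 'rV[R]_d)
  (Rel : forall rho : P, {set 'I_(len rho)})
  (Q K : 'I_L -> 'I_H -> R) (tau feas : R) :
  (0 < L)%N -> (0 < H)%N -> (0 < d)%N ->
  (forall rho, (0 < len rho)%N) ->
  (forall rho l h, normv (q rho l h) <= Q l h) ->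
  (forall rho l h j, normv (k rho l h j) <= K l h) ->
  (forall rho, #|Rel rho| = m) ->
  0 < tau -> 0 < feas ->
  (ereal_sup [set ((len rho)%:R : R)%:E | rho in
                [set rho | (tau <= attn_mass (q rho) (k rho) (Rel rho))%R]]
     * (feas^-1)%:E <=
   ((m%:R / (tau * feas)) *
    expR (\big[Num.max/0]_(l < L) \big[Num.max/0]_(h < H)
            (2 * Q l h * K l h / Num.sqrt d%:R)))%:E)%E.
Proof.
move=> L_gt0 H_gt0 _ len_gt0 q_le k_le card_Rel tau_gt0 feas_gt0.
set M := \big[Num.max/0]_(l < L) _.
have M_ge l h : 2 * Q l h * K l h / Num.sqrt d%:R <= M.
  by apply: le_trans (le_bigmax _ _ l); apply: le_bigmax.
have sup_le : (ereal_sup [set ((len rho)%:R : R)%:E | rho in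
    [set rho | (tau <= attn_mass (q rho) (k rho) (Rel rho))%R]] <=
    (m%:R / tau * expR M)%:E)%E.
  apply: ge_ereal_sup => _ [rho tau_le <-]; rewrite lee_fin -(card_Rel rho).
  exact: len_le_of_attn_mass_ge tau_le.
apply: le_trans (lee_wpmul2r _ sup_le) _; first by rewrite lee_fin invr_ge0 ltW.
by rewrite -EFinM lee_fin invfM !mulrA mulrAC.
Qed.
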